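(* A graph $G$ is an iso-unique Grundy domination graph if and only if each connected component of $G$ is a complete graph.
   Context: For a graph $G$, $N(v)$ is the open neighborhood and $N[v]=N(v)\cup\{v\}$ the closed neighborhood of $v$. A sequence $(v_1,\ldots,v_k)$ of distinct vertices is a closed neighborhood sequence if $N[v_i]\setminus\bigcup_{j=1}^{i-1}N[v_j]\neq\emptyset$ for each $i\in[k]$. The Grundy domination number $\gamma_{gr}(G)$ is the maximum length of a closed neighborhood sequence; the set of vertices of a closed neighborhood sequence of length $\gamma_{gr}(G)$ is a Grundy dominating set. $G$ is an iso-unique Grundy domination graph if for every two Grundy dominating sets $A,B$ of $G$ there is an automorphism $\phi$ of $G$ with $\phi(A)=B$. *)

From mathcomp Require Import all_boot.
From mathcomp Require Import perm.
Set Implicit Arguments. Unset Strict Implicit. Unset Printing Implicit Defensive.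

Definition simple_graph (T : finType) (e : rel T) : Prop :=
  symmetric e /\ irreflexive e.

Definition cnbhd (T : finType) (e : rel T) (v : T) : {set T} :=
  [set u | (u == v) || e v u].

Definition closed_nbhd_seq (T : finType) (e : rel T) (s : seq T) : Prop :=
  uniq s /\
  forall x0 : T, forall i, i < size s ->
    cnbhd e (nth x0 s i) :\: (\bigcup_(j < i) cnbhd e (nth x0 s j)) != set0.

Definition grundy_dominating_set (T : finType) (e : rel T) (A : {set T}) : Prop :=
  exists s : seq T, [/\ closed_nbhd_seq e s, A = [set x in s] &
    forall s' : seq T, closed_nbhd_seq e s' -> size s' <= size s].

Definition graph_automorphism (T : finType) (e : rel T) (phi : {perm T}) : Prop :=
  forall x y, e (phi x) (phi y) = e x y.

Definition iso_unique_grundy (T : finType) (e : rel T) : Prop :=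
  forall A B : {set T}, grundy_dominating_set e A -> grundy_dominating_set e B ->
    exists phi : {perm T}, graph_automorphism e phi /\ phi @: A = B.

Definition components_complete (T : finType) (e : rel T) : Prop :=
  forall x y : T, connect e x y -> x != y -> e x y.

From mathcomp Require Import all_boot.
From mathcomp Require Import perm.
Set Implicit Arguments. Unset Strict Implicit. Unset Printing Implicit Defensive.

(* If every component is a clique, then N[v] is the component of v, so a
   closed neighborhood sequence uses each component at most once and a maximum
   one uses each exactly once; any two such transversals are exchanged by a
   permutation fixing every component, which is an automorphism.
   Conversely, suppose x, y are non-adjacent in one component K.  Reorder a
   maximum sequence so that K comes last, and let D be dominated by all but its
   last vertex: every vertex z with N[z] not inside D can replace that last
   vertex.  An edge uw with u outside D and w inside D gives two Grundy
   dominating sets (last vertex u, resp. w) inducing different numbers of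
   edges, so there is none; hence K misses D, and ending the sequence with x
   leaves y undominated. *)

Section ClassTransversal.
Variables (T : finType) (r : rel T).
Hypotheses (r_sym : symmetric r) (r_trans : transitive r).

Definition class_transversal (A : {set T}) : Prop :=
  {in A &, forall a b, r a b -> a = b} /\ forall x, exists2 a, a \in A & r x a.

Definition class_rep (A : {set T}) (x : T) : T := odflt x [pick a in A | r x a].

Section ClassRep.
Variable A : {set T}.
Hypothesis trA : class_transversal A.

Lemma class_repP x : class_rep A x \in A /\ r x (class_rep A x).
Proof.
rewrite /class_rep; case: pickP => [a /andP[] //|/= noA].
by have [a aA xa] := trA.2 x; have := noA a; rewrite aA xa.
Qed.

Lemma class_rep_eq x y : r x y -> class_rep A x = class_rep A y.
Proof.
move=> xy; have [Ax xAx] := class_repP x; have [Ay yAy] := class_repP y.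
case: trA => uniqA _; apply: uniqA => //.
have Axy : r (class_rep A x) y by apply: r_trans xy; rewrite r_sym.
exact: r_trans Axy yAy.
Qed.

Lemma class_rep_id a : a \in A -> class_rep A a = a.
Proof.
move=> aA; have [Aa aAa] := class_repP a.
by case: trA => uniqA _; apply: uniqA; rewrite // r_sym.
Qed.

End ClassRep.

(* Within each class, swap the representatives of A and B. *)
Lemma class_transversal_perm A B : class_transversal A -> class_transversal B ->
  exists phi : {perm T}, (forall x, r x (phi x)) /\ phi @: A = B.
Proof.
move=> trA trB; pose f x := tperm (class_rep A x) (class_rep B x) x.
have r_f x : r x (f x).
  rewrite /f; case: tpermP => [_|_|_ _]; first exact: (class_repP trB x).2.
    exact: (class_repP trA x).2.
  have [_ xAx] := class_repP trA x; have Ax_x : r (class_rep A x) x by rewrite r_sym.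
  exact: r_trans xAx Ax_x.
have f_inj : injective f.
  move=> x y fxy; have xy : r x y by apply: r_trans (r_f x) _; rewrite fxy r_sym.
  by move: fxy; rewrite /f (class_rep_eq trA xy) (class_rep_eq trB xy); apply: perm_inj.
exists (perm f_inj); split=> [x|]; first by rewrite permE.
apply/setP => b; apply/imsetP/idP => [[a aA ->]|bB].
  by rewrite permE /f (class_rep_id trA aA) tpermL; apply: (class_repP trB a).1.
have [Ab bAb] := class_repP trA b; exists (class_rep A b) => //.
rewrite permE /f (class_rep_id trA Ab) tpermL -(class_rep_eq trB bAb).
by rewrite (class_rep_id trB bB).
Qed.

End ClassTransversal.

Section LegalSequences.
Variables (T : finType) (e : rel T).
Local Notation N := (cnbhd e).

Lemma cnbhd_refl x : x \in N x.
Proof. by rewrite inE eqxx. Qed.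

Lemma cnbhd_connect y z : z \in N y -> connect e y z.
Proof. by rewrite inE => /predU1P[-> // | /connect1]. Qed.

Definition dominated (s : seq T) : {set T} := \bigcup_(y <- s) N y.

Lemma mem_dominated z s : (z \in dominated s) = has (fun y => z \in N y) s.
Proof.
elim: s => [|y s IHs]; first by rewrite /dominated big_nil inE.
by rewrite /dominated big_cons in_setU -/(dominated s) IHs.
Qed.

Lemma cnbhd_sub_dominated y s : y \in s -> N y \subset dominated s.
Proof. by move=> ys; apply/subsetP => z zNy; rewrite mem_dominated; apply/hasP; exists y. Qed.

Fixpoint legal (D : {set T}) (s : seq T) : bool :=
  if s is x :: s' then ~~ (N x \subset D) && legal (D :|: N x) s' else true.

Lemma legal_nthP x0 D s :
  (forall i, i < size s ->
     N (nth x0 s i) :\: (D :|: \bigcup_(j < i) N (nth x0 s j)) != set0)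
  <-> legal D s.
Proof.
elim: s D => [|x s IHs] D /=; first by [].
split=> [new|/andP[xD /IHs news]].
  apply/andP; split; first by have := new 0 isT; rewrite big_ord0 setU0 -setD_eq0.
  by apply/IHs => i lt_i; have := new i.+1 lt_i; rewrite big_ord_recl setUA.
case=> [|i] /= lt_i; first by rewrite big_ord0 setU0 setD_eq0.
by rewrite big_ord_recl setUA; apply: news.
Qed.

Lemma legal_cnbhd_not_sub D s y : legal D s -> y \in s -> ~~ (N y \subset D).
Proof.
elim: s D => [|x s IHs] D //= /andP[xD legal_s]; rewrite inE => /predU1P[-> //|ys].
by apply: contra (IHs _ legal_s ys) => /subset_trans; apply; apply: subsetUl.
Qed.

Lemma legal_cnbhd_inj D s : legal D s -> {in s &, injective N}.
Proof.
elim: s D => [|z s IHs] D //= /andP[_ legal_s] x y.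
rewrite !inE => /predU1P[->|xs] /predU1P[->|ys] // Nxy.
- by have := legal_cnbhd_not_sub legal_s ys; rewrite -Nxy subsetUr.
- by have := legal_cnbhd_not_sub legal_s xs; rewrite Nxy subsetUr.
- exact: IHs legal_s x y xs ys Nxy.
Qed.

Lemma legal_uniq D s : legal D s -> uniq s.
Proof.
elim: s D => [|x s IHs] D //= /andP[_ legal_s]; rewrite (IHs _ legal_s) andbT.
by apply/negP => /(legal_cnbhd_not_sub legal_s); rewrite subsetUr.
Qed.

Lemma closed_nbhd_seq_legal s : closed_nbhd_seq e s <-> legal set0 s.
Proof.
split=> [[_]|legal_s].
  by case: s => [|x s] // new; apply/(legal_nthP x) => i; rewrite set0U; apply: new.
split=> [|x0 i]; first exact: legal_uniq legal_s.
by rewrite -[\bigcup_(j < i) _]set0U; move: i; apply/(legal_nthP x0).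
Qed.

Lemma legal_cat D s1 s2 : legal D (s1 ++ s2) = legal D s1 && legal (D :|: dominated s1) s2.
Proof.
elim: s1 D => [|x s IHs] D /=; first by rewrite /dominated big_nil setU0.
by rewrite IHs /dominated big_cons setUA andbA.
Qed.

Lemma legal_rcons D s z :
  legal D (rcons s z) = legal D s && ~~ (N z \subset D :|: dominated s).
Proof. by rewrite -cats1 legal_cat /= andbT. Qed.

Lemma legal_setU_disjoint (D X : {set T}) s :
  (forall y z, y \in s -> z \in N y -> z \notin X) -> legal (D :|: X) s = legal D s.
Proof.
elim: s D => [|y s IHs] D //= NsX.
rewrite -setUA [X :|: _]setUC setUA IHs => [|x z xs]; last exact/NsX/mem_behead.
congr (~~ _ && _); apply/idP/idP => [NyDX|]; last by move/subset_trans; apply; apply: subsetUl.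
apply/subsetP => z zNy; have := subsetP NyDX z zNy; rewrite in_setU => /orP[// | zX].
by have := NsX y z (mem_head _ _) zNy; rewrite zX.
Qed.

Definition grundy_seq (s : seq T) : Prop :=
  legal set0 s /\ forall s', legal set0 s' -> size s' <= size s.

Lemma grundy_dominating_setP A :
  grundy_dominating_set e A <-> exists2 s, grundy_seq s & A = [set x in s].
Proof.
split=> [[s [/closed_nbhd_seq_legal legal_s -> max_s]]|[s [legal_s max_s] ->]].
  by exists s => //; split=> // s' /closed_nbhd_seq_legal; apply: max_s.
exists s; split=> //; first exact/closed_nbhd_seq_legal.
by move=> s' /closed_nbhd_seq_legal; apply: max_s.
Qed.

Lemma exists_grundy_seq : exists s, grundy_seq s.
Proof.
pose P n := [exists t : n.-tuple T, legal set0 t].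
have P0 : P 0 by apply/existsP; exists [tuple].
have P_bound n : P n -> n <= #|T|.
  move=> /existsP[t /legal_uniq uniq_t].
  by rewrite -(size_tuple t) -(card_uniqP uniq_t) max_card.
have [m /existsP[t legal_t] max_m] := ex_maxnP (ex_intro _ 0 P0) P_bound.
exists t; split=> // s' legal_s'; rewrite size_tuple; apply: max_m.
by apply/existsP; exists (in_tuple s').
Qed.

Lemma grundy_seq_dominated s z : grundy_seq s -> z \in dominated s.
Proof.
move=> [legal_s max_s]; apply: contraT => zs.
have : legal set0 (rcons s z).
  by rewrite legal_rcons legal_s set0U; apply: contra zs => /subsetP; apply; apply: cnbhd_refl.
by move/max_s; rewrite size_rcons ltnn.
Qed.

Lemma grundy_seq_rcons t v z :
  grundy_seq (rcons t v) -> ~~ (N z \subset dominated t) -> grundy_seq (rcons t z).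
Proof.
move=> [legal_tv max_tv] Nz; split=> [|s' /max_tv]; last by rewrite !size_rcons.
by move: legal_tv; rewrite !legal_rcons set0U Nz => /andP[-> _].
Qed.

End LegalSequences.

Section ComponentsLast.
Variables (T : finType) (e : rel T).
Local Notation N := (cnbhd e).

Lemma closed_cnbhd (C : pred T) y z : closed e C -> z \in N y -> C z = C y.
Proof. by move=> clC; rewrite inE => /predU1P[-> // | /clC]. Qed.

Lemma cnbhd_meet_closed (C : pred T) x y z : closed e C ->
  z \in N x -> z \in N y -> C x = C y.
Proof. by move=> clC zNx zNy; rewrite -(closed_cnbhd clC zNx) (closed_cnbhd clC zNy). Qed.

Lemma legal_filter_split (C : pred T) D s : closed e C ->
  legal e D s = legal e D (filter C s) && legal e D (filter (predC C) s).
Proof.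
move=> clC; elim: s D => [|x s IHs] D //=.
have apart y z : C y != C x -> z \in N y -> z \notin N x.
  by move=> yx zNy; apply: contra yx => zNx; apply/eqP; apply: cnbhd_meet_closed clC zNy zNx.
case: ifPn => xC /=; rewrite IHs.
  rewrite [legal _ _ (filter (predC C) _)]legal_setU_disjoint ?andbA // => y z.
  by rewrite mem_filter => /andP[yC _]; apply: apart; rewrite xC (negPf yC).
rewrite [legal _ _ (filter C _)]legal_setU_disjoint 1?andbCA // => y z.
by rewrite mem_filter => /andP[yC _]; apply: apart; rewrite yC (negPf xC).
Qed.

Lemma exists_grundy_seq_last (C : pred T) x : closed e C -> C x ->
  exists t v, grundy_seq e (rcons t v) /\ C v.
Proof.
move=> clC xC; have [s [legal_s max_s]] := exists_grundy_seq e.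
have legal_OC : legal e set0 (filter (predC C) s ++ filter C s).
  move: legal_s; rewrite (legal_filter_split _ _ clC) legal_cat andbC.
  rewrite -[_ :|: dominated _ _]set0U legal_setU_disjoint // => y z.
  rewrite mem_filter set0U mem_dominated => /andP[yC _] zNy; apply/hasP => -[y'].
  rewrite mem_filter => /andP[y'C _] zNy'; have := cnbhd_meet_closed clC zNy zNy'.
  by rewrite yC (negPf y'C).
have size_OC : size (filter (predC C) s ++ filter C s) = size s.
  by rewrite size_cat !size_filter addnC count_predC.
have [t [v sC]] : exists t v, filter C s = rcons t v.
  have := grundy_seq_dominated x (conj legal_s max_s); rewrite mem_dominated.
  case/hasP => y ys /(closed_cnbhd clC); rewrite xC => /esym yC.
  have : y \in filter C s by rewrite mem_filter yC ys.
  by case/lastP: (filter C s) => // t v _; exists t, v.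
exists (filter (predC C) s ++ t), v; split.
  by rewrite rcons_cat -sC; split=> // s' /max_s; rewrite size_OC.
have : v \in filter C s by rewrite sC mem_rcons mem_head.
by rewrite mem_filter => /andP[].
Qed.

End ComponentsLast.

Section InducedEdges.
Variables (T : finType) (e : rel T).

Lemma set_rcons (t : seq T) z : [set x in rcons t z] = z |: [set x in t].
Proof. by apply/setP => x; rewrite !inE mem_rcons inE. Qed.

Definition induced_edges (A : {set T}) : {set T * T} :=
  [set p | [&& p.1 \in A, p.2 \in A & e p.1 p.2]].

Lemma card_induced_edges_automorphism (phi : {perm T}) A :
  graph_automorphism e phi -> #|induced_edges A| <= #|induced_edges (phi @: A)|.
Proof.
move=> aut; have phi2_inj : injective (fun p : T * T => (phi p.1, phi p.2)).
  by move=> [a b] [c d] [/perm_inj -> /perm_inj ->].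
rewrite -(card_imset _ phi2_inj); apply/subset_leq_card/subsetP => _ /imsetP[[a b] + ->].
by rewrite !inE /= aut => /and3P[aA bA ->]; rewrite !imset_f.
Qed.

Lemma induced_edges_setU1_proper w y (A : {set T}) : w \notin A -> y \in A -> e w y ->
  induced_edges A \proper induced_edges (w |: A).
Proof.
move=> wA yA ewy; apply/properP; split.
  by apply/subsetP => -[a b]; rewrite !inE /= => /and3P[-> -> ->]; rewrite !orbT.
by exists (w, y); rewrite !inE /= ?eqxx ?yA ?ewy ?orbT // (negPf wA).
Qed.

Hypotheses (e_sym : symmetric e) (e_irr : irreflexive e).

Lemma induced_edges_setU1_isolated u (A : {set T}) :
  {in A, forall a, ~~ e u a} -> induced_edges (u |: A) = induced_edges A.
Proof.
move=> u_isolated; apply/setP => -[a b]; rewrite !inE /=.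
have no_u_edge c : (c \in A) && e u c = false.
  by apply/negbTE/nandP; case: (boolP (c \in A)) => [/u_isolated|]; [right | left].
case: (eqVneq a u) => [->|_]; case: (eqVneq b u) => [->|_] //=.
- by rewrite e_irr !andbF.
- by rewrite no_u_edge andbF.
- by rewrite e_sym no_u_edge andbCA no_u_edge andbF.
Qed.

End InducedEdges.

Section IsoUniqueComponentsComplete.
Variables (T : finType) (e : rel T).
Hypotheses (e_sym : symmetric e) (e_irr : irreflexive e).
Hypothesis iso_unique : iso_unique_grundy e.
Local Notation N := (cnbhd e).

Lemma grundy_prefix_no_boundary_edge t v u w :
  grundy_seq e (rcons t v) -> u \notin dominated e t -> w \in dominated e t -> ~~ e u w.
Proof.
move=> gtv uD wD; apply/negP => euw.
have not_dom_u y : y \in t -> ~~ e y u.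
  move=> yt; apply: contra uD => eyu.
  by apply: (subsetP (cnbhd_sub_dominated e yt)); rewrite inE eyu orbT.
have Nu : ~~ (N u \subset dominated e t).
  by apply/subsetPn; exists u => //; apply: cnbhd_refl.
have Nw : ~~ (N w \subset dominated e t).
  by apply/subsetPn; exists u => //; rewrite inE e_sym euw orbT.
have grundy_last z : ~~ (N z \subset dominated e t) ->
    grundy_dominating_set e [set x in rcons t z].
  move=> Nz; apply/grundy_dominating_setP.
  by exists (rcons t z); first exact: grundy_seq_rcons gtv Nz.
have [phi [aut phi_tw]] := iso_unique (grundy_last w Nw) (grundy_last u Nu).
have := card_induced_edges_automorphism [set x in rcons t w] aut.
rewrite phi_tw !set_rcons (@induced_edges_setU1_isolated _ _ e_sym e_irr u); last first.
  by move=> y; rewrite inE e_sym => /not_dom_u.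
apply/negP; rewrite -ltnNge; apply: proper_card.
move: wD; rewrite mem_dominated => /hasP[y yt wNy].
have wt : w \notin t by apply/negP => /not_dom_u; rewrite e_sym euw.
apply: (@induced_edges_setU1_proper _ _ w y); rewrite ?inE //.
by move: wNy; rewrite inE e_sym; case: eqVneq wt => // ->; rewrite yt.
Qed.

Lemma grundy_prefix_undominated_closed t v :
  grundy_seq e (rcons t v) -> closed e [pred z | z \notin dominated e t].
Proof.
move=> gtv a b eab; rewrite !inE; congr negb; apply/idP/idP => [aD|bD]; apply: contraT => D'.
  by have := grundy_prefix_no_boundary_edge gtv D' aD; rewrite e_sym eab.
by have := grundy_prefix_no_boundary_edge gtv D' bD; rewrite eab.
Qed.

Lemma iso_unique_components_complete : components_complete e.
Proof.
move=> x y cxy neq_xy; apply: contraT => not_exy.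
have e_csym : connect_sym e := sym_connect_sym e_sym.
have [t [v [gtv cxv]]] := exists_grundy_seq_last (connect_closed e_csym x) (connect0 e x).
have [u uNv uD] : exists2 u, u \in N v & u \notin dominated e t.
  by apply/subsetPn; case: gtv; rewrite legal_rcons set0U => /andP[].
have clD := grundy_prefix_undominated_closed gtv.
have cxu : connect e x u := connect_trans cxv (cnbhd_connect uNv).
have xD : x \notin dominated e t by have := closed_connect clD cxu; rewrite !inE uD.
have yD : y \notin dominated e t by have := closed_connect clD cxy; rewrite !inE xD.
have Nx : ~~ (N x \subset dominated e t) by apply/subsetPn; exists x; rewrite ?cnbhd_refl.
have := grundy_seq_dominated y (grundy_seq_rcons gtv Nx).
rewrite mem_dominated has_rcons -mem_dominated (negPf yD) orbF inE eq_sym.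
by rewrite (negPf neq_xy) (negPf not_exy).
Qed.

End IsoUniqueComponentsComplete.

Section ComponentsCompleteIsoUnique.
Variables (T : finType) (e : rel T).
Hypotheses (e_sym : symmetric e) (e_irr : irreflexive e).
Hypothesis complete : components_complete e.
Local Notation N := (cnbhd e).

Let e_csym : connect_sym e := sym_connect_sym e_sym.

Lemma edge_connect x y : e x y = connect e x y && (x != y).
Proof.
apply/idP/andP => [exy|[]]; last exact: complete.
by rewrite connect1 //; split=> //; apply: contraTneq exy => ->; rewrite e_irr.
Qed.

Lemma cnbhd_component x : N x = [set z | connect e x z].
Proof.
apply/setP => z; rewrite inE; apply/idP/idP => [/cnbhd_connect //|cxz].
by rewrite inE edge_connect cxz /= eq_sym orbN.
Qed.

Lemma component_perm_automorphism (phi : {perm T}) :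
  (forall x, connect e x (phi x)) -> graph_automorphism e phi.
Proof.
move=> c_phi x y; rewrite !edge_connect (inj_eq perm_inj); congr (_ && _).
have c_phi_sym z : connect e (phi z) z by rewrite e_csym.
apply/idP/idP => c.
  exact: connect_trans (connect_trans (c_phi x) c) (c_phi_sym y).
exact: connect_trans (connect_trans (c_phi_sym x) c) (c_phi y).
Qed.

Lemma grundy_seq_class_transversal s :
  grundy_seq e s -> class_transversal (connect e) [set x in s].
Proof.
move=> gs; split=> [a b|x].
  rewrite !inE => sa sb cab; apply: (legal_cnbhd_inj gs.1) => //.
  by rewrite !cnbhd_component; apply/setP => z; rewrite !inE (same_connect e_csym cab).
have := grundy_seq_dominated x gs; rewrite mem_dominated => /hasP[a sa xNa].
by exists a; rewrite ?inE // e_csym cnbhd_connect.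
Qed.

Lemma components_complete_iso_unique : iso_unique_grundy e.
Proof.
move=> A B /grundy_dominating_setP[s gs ->] /grundy_dominating_setP[t gt ->].
have [phi [c_phi phi_st]] := class_transversal_perm e_csym (@connect_trans _ e)
  (grundy_seq_class_transversal gs) (grundy_seq_class_transversal gt).
by exists phi; split=> //; apply: component_perm_automorphism.
Qed.

End ComponentsCompleteIsoUnique.

Theorem theorem4p4 (T : finType) (e : rel T) :
  simple_graph e -> (iso_unique_grundy e <-> components_complete e).
Proof.
move=> [e_sym e_irr]; split.
  exact: iso_unique_components_complete.
exact: components_complete_iso_unique.
Qed.
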